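(* Let $G$ be a unibased group and let $K$ be a field endowed with a non-trivial smooth $G$-action. Then $\mathrm{Sm}_K(G)$ is equivalent to each of its non-zero full subcategories closed under direct products and subquotients.
   Context: A permutation group is a Hausdorff topological group admitting a base of open sets consisting of left and right translates of subgroups. A permutation group $G$ is unibased if, for every open proper subgroup, the finite intersections of its conjugates form a base of open subgroups (neighbourhoods of $1$) of $G$. $\mathrm{Sm}_K(G)$ is the category of smooth left modules over the skew group ring $K\langle G\rangle$ ($(a[g])(b[h])=ab^g[gh]$), smooth meaning every element has an open stabilizer. The action on $K$ is smooth if stabilizers of elements of $K$ are open, and non-trivial if some element of $G$ acts non-trivially. *)

From HB Require Import structures.
From mathcomp Require Import all_boot all_algebra.
From mathcomp Require Import classical_sets boolp topology.

Set Implicit Arguments.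
Unset Strict Implicit.
Unset Printing Implicit Defensive.
Import GRing.Theory.
Local Open Scope classical_set_scope.
Local Open Scope ring_scope.

Record topGroup := TopGroup {
  tg_car :> topologicalType;
  tg_mul : tg_car -> tg_car -> tg_car;
  tg_inv : tg_car -> tg_car;
  tg_one : tg_car;
  tg_mulA : forall x y z, tg_mul x (tg_mul y z) = tg_mul (tg_mul x y) z;
  tg_mul1 : forall x, tg_mul tg_one x = x;
  tg_mul1r : forall x, tg_mul x tg_one = x;
  tg_mulV : forall x, tg_mul (tg_inv x) x = tg_one;
  tg_mulVr : forall x, tg_mul x (tg_inv x) = tg_one;
  tg_mul_cont : continuous (fun p : tg_car * tg_car => tg_mul p.1 p.2);
  tg_inv_cont : continuous tg_inv
}.

Section GroupDefs.
Variable G : topGroup.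
Local Notation one := (tg_one G).

Definition is_subgroup (H : set G) : Prop :=
  [/\ H one, (forall x y, H x -> H y -> H (tg_mul x y)) & (forall x, H x -> H (tg_inv x))].

Definition lcoset (g : G) (H : set G) : set G := [set tg_mul g h | h in H].
Definition rcoset (H : set G) (g : G) : set G := [set tg_mul h g | h in H].
Definition conjset (g : G) (H : set G) : set G := [set tg_mul (tg_mul g h) (tg_inv g) | h in H].

Definition is_open_base (B : set (set G)) : Prop :=
  (forall b, B b -> open b) /\
  (forall (U : set G) (x : G), open U -> U x -> exists b, [/\ B b, b x & b `<=` U]).

Definition permutation_group : Prop :=
  hausdorff_space G /\
  exists B : set (set G),
    is_open_base B /\
    (forall b, B b -> exists (H : set G) (g : G),
        is_subgroup H /\ (b = lcoset g H \/ b = rcoset H g)).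

Definition unibased : Prop :=
  forall H : set G, is_subgroup H -> open H -> H <> setT ->
  forall U : set G, nbhs one U ->
  exists (n : nat) (g : 'I_n -> G),
    [set x | forall i, conjset (g i) H x] `<=` U.

End GroupDefs.

Section Smooth.
Variables (G : topGroup) (K : fieldType) (actK : G -> K -> K).
Local Notation one := (tg_one G).

(* G acts on K by ring automorphisms, b |-> b^g, with (b^h)^g = b^(gh),
   as required for the skew group ring K<G>, (a[g])(b[h]) = a b^g [gh]. *)
Definition field_action : Prop :=
  [/\ forall g a b, actK g (a + b) = actK g a + actK g b,
      forall g a b, actK g (a * b)%R = (actK g a * actK g b)%R,
      forall g, actK g 1 = 1,
      forall a, actK one a = a &
      forall g h a, actK (tg_mul g h) a = actK g (actK h a)].

Definition smooth_field_action : Prop :=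
  forall a : K, open [set g : G | actK g a = a].

Definition nontrivial_field_action : Prop :=
  exists (g : G) (a : K), actK g a <> a.

(* A smooth left K<G>-module: a K-vector space M (action of the a[1])
   with an action of the [g] such that [g] (a m) = a^g ([g] m), and with
   open stabilisers. *)
Record smod := SMod {
  sm_car :> lmodType K;
  sm_act : G -> sm_car -> sm_car;
  sm_act_add : forall g (x y : sm_car), sm_act g (x + y) = sm_act g x + sm_act g y;
  sm_act_scale : forall g (a : K) (x : sm_car), sm_act g (a *: x) = actK g a *: sm_act g x;
  sm_act_one : forall x, sm_act one x = x;
  sm_act_mul : forall g h x, sm_act (tg_mul g h) x = sm_act g (sm_act h x);
  sm_smooth : forall x : sm_car, open [set g : G | sm_act g x = x]
}.

Definition is_shom (M N : smod) (f : M -> N) : Prop :=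
  (forall (a : K) (x y : M), f (a *: x + y) = a *: f x + f y) /\
  (forall g (x : M), f (sm_act g x) = sm_act g (f x)).

Definition shom (M N : smod) := {f : M -> N | is_shom f}.

Definition shom_fun (M N : smod) (f : shom M N) : M -> N := proj1_sig f.

Lemma is_shom_id (M : smod) : is_shom (@id M).
Proof. by split. Qed.

Lemma is_shom_comp (M N P : smod) (f : shom N P) (g : shom M N) :
  is_shom (shom_fun f \o shom_fun g).
Proof.
case: f => f [f1 f2]; case: g => g [g1 g2]; split => /=.
- by move=> a x y; rewrite g1 f1.
- by move=> h x; rewrite g2 f2.
Qed.

Definition sid (M : smod) : shom M M := exist _ _ (is_shom_id M).
Definition scomp (M N P : smod) (f : shom N P) (g : shom M N) : shom M P :=
  exist _ _ (is_shom_comp f g).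

Definition heq (M N : smod) (f g : shom M N) : Prop :=
  forall x, shom_fun f x = shom_fun g x.

Definition nonzero_smod (M : smod) : Prop := exists x : M, x <> 0.

Definition subquotient (N M : smod) : Prop :=
  exists (L : smod) (i : shom L M) (p : shom L N),
    injective (shom_fun i) /\ (forall y : N, exists x : L, shom_fun p x = y).

Definition closed_subquotients (P : smod -> Prop) : Prop :=
  forall M N : smod, P M -> subquotient N M -> P N.

Definition is_product (I : Type) (Ms : I -> smod) (X : smod)
  (proj : forall i, shom X (Ms i)) : Prop :=
  forall (Y : smod) (f : forall i, shom Y (Ms i)),
    exists u : shom Y X,
      (forall i, heq (scomp (proj i) u) (f i)) /\
      (forall v : shom Y X, (forall i, heq (scomp (proj i) v) (f i)) -> heq v u).

Definition closed_products (P : smod -> Prop) : Prop :=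
  forall (I : Type) (Ms : I -> smod) (X : smod) (proj : forall i, shom X (Ms i)),
    (forall i, P (Ms i)) -> is_product proj -> P X.

Definition subobj (P : smod -> Prop) := {M : smod | P M}.

Record sfunctor (P Q : smod -> Prop) := SFunctor {
  fobj : subobj P -> subobj Q;
  fmap : forall X Y : subobj P,
      shom (proj1_sig X) (proj1_sig Y) ->
      shom (proj1_sig (fobj X)) (proj1_sig (fobj Y));
  fmap_id : forall X, heq (fmap (sid (proj1_sig X))) (sid _);
  fmap_comp : forall X Y Z (f : shom (proj1_sig Y) (proj1_sig Z))
      (g : shom (proj1_sig X) (proj1_sig Y)),
      heq (fmap (scomp f g)) (scomp (fmap f) (fmap g))
}.

Definition sequiv (P Q : smod -> Prop) : Prop :=
  exists (F : sfunctor P Q) (H : sfunctor Q P)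
    (eta : forall X : subobj P, shom (proj1_sig X) (proj1_sig (fobj H (fobj F X))))
    (eta' : forall X : subobj P, shom (proj1_sig (fobj H (fobj F X))) (proj1_sig X))
    (eps : forall Y : subobj Q, shom (proj1_sig (fobj F (fobj H Y))) (proj1_sig Y))
    (eps' : forall Y : subobj Q, shom (proj1_sig Y) (proj1_sig (fobj F (fobj H Y)))),
    [/\ (forall X, heq (scomp (eta' X) (eta X)) (sid _) /\
                   heq (scomp (eta X) (eta' X)) (sid _)),
        (forall Y, heq (scomp (eps' Y) (eps Y)) (sid _) /\
                   heq (scomp (eps Y) (eps' Y)) (sid _)),
        (forall (X X' : subobj P) (f : shom (proj1_sig X) (proj1_sig X')),
            heq (scomp (fmap H (fmap F f)) (eta X)) (scomp (eta X') f)) &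
        (forall (Y Y' : subobj Q) (f : shom (proj1_sig Y) (proj1_sig Y')),
            heq (scomp f (eps Y)) (scomp (eps Y') (fmap F (fmap H f))))].

Definition all_smod : smod -> Prop := fun _ => True.

End Smooth.

From HB Require Import structures.
From mathcomp Require Import all_boot all_algebra.
From mathcomp Require Import classical_sets boolp functions topology.

Set Implicit Arguments.
Unset Strict Implicit.
Unset Printing Implicit Defensive.
Import GRing.Theory.
Local Open Scope classical_set_scope.
Local Open Scope ring_scope.

(* Fix a non-zero object M of P and m <> 0 in M. It suffices to show that every smooth
   module V is a subquotient of a power of M, for then P contains every object and its
   inclusion is an equivalence. Unibasedness and a non-trivial smooth action on K make the
   pointwise stabilisers Fix(bs) of finite subsets bs of K a neighbourhood base of 1, so
   each w in V is fixed, together with m, by some Fix(bs_w); let F_w be its fixed field.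
   Then delta w : (v, c) |-> [v = w /\ c in F_w] c m is a smooth vector of M^(V x K), and
   the K<G>-span of the pairs (delta w, w) in M^(V x K) x V maps onto V and injectively
   into M^(V x K): if sum_t a_t h_t (delta w_t) = 0, its values at the (w, c), c in F_w,
   are vanishing combinations of the characters h_t restricted to F_w, so by Dedekind's
   lemma the coefficients cancel on each class of h_t agreeing on F_w, and all h_t in such
   a class act in the same way on w. *)

Section TopGroup.
Variable G : topGroup.
Local Notation mul := (@tg_mul G).
Local Notation inv := (@tg_inv G).
Local Notation one := (tg_one G).

Lemma tg_mulKVg (g x : G) : mul g (mul (inv g) x) = x.
Proof. by rewrite tg_mulA tg_mulVr tg_mul1. Qed.

Lemma open_lmul_preimage (a : G) (O : set G) : open O -> open [set y | O (mul a y)].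
Proof.
have cont : continuous (mul a).
  move=> y; apply: (@continuous2_cvg _ _ _ _ _ _ (fun=> a) id mul a y).
  - exact: (@tg_mul_cont G (a, y)).
  - exact: cvg_cst.
  - exact: cvg_id.
by move=> oO; exact: (proj1 (continuousP _) cont O oO).
Qed.

Lemma open_rmul_preimage (a : G) (O : set G) : open O -> open [set y | O (mul y a)].
Proof.
have cont : continuous (mul^~ a).
  move=> y; apply: (@continuous2_cvg _ _ _ _ _ _ id (fun=> a) mul y a).
  - exact: (@tg_mul_cont G (y, a)).
  - exact: cvg_id.
  - exact: cvg_cst.
by move=> oO; exact: (proj1 (continuousP _) cont O oO).
Qed.

Lemma open_of_mul_closed (H O : set G) :
  (forall x y, H x -> H y -> H (mul x y)) -> open O -> O one -> O `<=` H -> open H.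
Proof.
move=> mulH oO O1 OH.
have -> : H = \bigcup_(h in H) [set y | O (mul (inv h) y)].
  apply/funext => y; apply/propext; split => [Hy|[h Hh /= Oy]].
    by exists y => //=; rewrite tg_mulV.
  by rewrite -(tg_mulKVg h y); apply: mulH => //; apply: OH.
by apply: bigcup_open => h _; apply: open_lmul_preimage.
Qed.

End TopGroup.

Section Semilinear.
Variables (G : topGroup) (K : fieldType) (actK : G -> K -> K).
Local Notation mul := (@tg_mul G).
Local Notation inv := (@tg_inv G).
Local Notation one := (tg_one G).
Variables (W : lmodType K) (act : G -> W -> W).
Hypotheses (act_add : forall g x y, act g (x + y) = act g x + act g y)
  (act_scale : forall g a x, act g (a *: x) = actK g a *: act g x)
  (act_one : forall x, act one x = x)
  (act_mul : forall g h x, act (mul g h) x = act g (act h x)).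

Lemma act0 g : act g 0 = 0.
Proof. by apply: (addrI (act g 0)); rewrite -act_add !addr0. Qed.

Lemma act_invK g x : act (inv g) (act g x) = x.
Proof. by rewrite -act_mul tg_mulV act_one. Qed.

Lemma act_invKV g x : act g (act (inv g) x) = x.
Proof. by rewrite -act_mul tg_mulVr act_one. Qed.

Definition stabilizer (x : W) : set G := [set g | act g x = x].

Definition smooth_vec (x : W) : Prop := open (stabilizer x).

Lemma stabilizer_mul_closed x g h :
  stabilizer x g -> stabilizer x h -> stabilizer x (mul g h).
Proof. by rewrite /stabilizer /= => gx hx; rewrite act_mul hx gx. Qed.

Lemma smooth_vec_of_sub x (O : set G) :
  open O -> O one -> O `<=` stabilizer x -> smooth_vec x.
Proof. exact/open_of_mul_closed/stabilizer_mul_closed. Qed.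

Section SubSmod.
Variable S : W -> Prop.
Hypotheses (S0 : S 0) (SD : forall x y, S x -> S y -> S (x + y))
  (SZ : forall a x, S x -> S (a *: x)) (S_act : forall g x, S x -> S (act g x))
  (S_smooth : forall x, S x -> smooth_vec x).

Definition sub_pred : pred W := fun x => `[< S x >].
Record sub_carrier := SubCarrier { sub_val :> W; _ : sub_pred sub_val }.
HB.instance Definition _ := [isSub for sub_val].
HB.instance Definition _ := [Choice of sub_carrier by <:].

Lemma sub_pred_subsemimod_closed : subsemimod_closed sub_pred.
Proof.
split; first split.
- exact/asboolP.
- by move=> x y /asboolP Sx /asboolP Sy; apply/asboolP/SD.
- by move=> a x /asboolP Sx; apply/asboolP/SZ.
Qed.
HB.instance Definition _ :=
  GRing.SubChoice_isSubLmodule.Build K W sub_pred sub_carrier sub_pred_subsemimod_closed.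

Definition sub_elem x (Sx : S x) : sub_carrier := SubCarrier (asboolT Sx).

Lemma sub_valP (x : sub_carrier) : S (val x).
Proof. exact: asboolW (valP x). Qed.

Definition sub_act g (x : sub_carrier) : sub_carrier := sub_elem (S_act g (sub_valP x)).

Lemma sub_act_add g (x y : sub_carrier) : sub_act g (x + y) = sub_act g x + sub_act g y.
Proof. by apply: val_inj; rewrite /= act_add. Qed.
Lemma sub_act_scale g a (x : sub_carrier) : sub_act g (a *: x) = actK g a *: sub_act g x.
Proof. by apply: val_inj; rewrite /= act_scale. Qed.
Lemma sub_act_one x : sub_act one x = x.
Proof. by apply: val_inj; rewrite /= act_one. Qed.
Lemma sub_act_mul g h x : sub_act (mul g h) x = sub_act g (sub_act h x).
Proof. by apply: val_inj; rewrite /= act_mul. Qed.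
Lemma sub_act_smooth (x : sub_carrier) : open [set g : G | sub_act g x = x].
Proof.
rewrite (_ : [set g | _] = stabilizer (val x)); first exact/S_smooth/sub_valP.
by apply/funext => g; apply/propext; split => [/(congr1 val) //|E]; exact: val_inj.
Qed.

Definition sub_smod : smod actK :=
  SMod sub_act_add sub_act_scale sub_act_one sub_act_mul sub_act_smooth.

End SubSmod.

Hypotheses (SM : smooth_field_action actK) (actK_one : forall a, actK one a = a).

Lemma smooth_vec0 : smooth_vec 0.
Proof.
rewrite /smooth_vec (_ : stabilizer 0 = setT); first exact: openT.
by apply/funext => g; apply/propext; split => // _; apply: act0.
Qed.

Lemma smooth_vecD x y : smooth_vec x -> smooth_vec y -> smooth_vec (x + y).
Proof.
move=> sx sy; apply: (smooth_vec_of_sub (openI sx sy)).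
  by split; rewrite /stabilizer /= act_one.
by move=> g [gx gy]; rewrite /stabilizer /= act_add gx gy.
Qed.

Lemma smooth_vecZ a x : smooth_vec x -> smooth_vec (a *: x).
Proof.
move=> sx; apply: (smooth_vec_of_sub (openI (SM a) sx)).
  by split; rewrite /stabilizer /= ?act_one.
by move=> g [ga gx]; rewrite /stabilizer /= act_scale ga gx.
Qed.

Lemma smooth_vec_act g x : smooth_vec x -> smooth_vec (act g x).
Proof.
move=> sx; rewrite /smooth_vec
  (_ : stabilizer _ = [set y | stabilizer x (mul (mul (inv g) y) g)]).
  exact: (open_lmul_preimage (inv g) (open_rmul_preimage g sx)).
apply/funext => y; apply/propext; rewrite /stabilizer /= !act_mul.
by split => [->|E]; [exact: act_invK | rewrite -{2}E act_invKV].
Qed.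

Definition smooth_part : smod actK :=
  sub_smod smooth_vec0 smooth_vecD smooth_vecZ smooth_vec_act (fun _ sx => sx).

End Semilinear.

Section SmodFacts.
Variables (G : topGroup) (K : fieldType) (actK : G -> K -> K) (M : smod actK).

Lemma sm_act0 g : sm_act g (0 : M) = 0.
Proof. exact: (@act0 _ _ _ _ (@sm_act_add _ _ _ M) g). Qed.

Lemma sm_act_sum g (T : Type) (s : seq T) (F : T -> M) :
  sm_act g (\sum_(t <- s) F t) = \sum_(t <- s) sm_act g (F t).
Proof.
elim: s => [|t s IH]; first by rewrite !big_nil sm_act0.
by rewrite !big_cons sm_act_add IH.
Qed.

Lemma sm_act_invK g (x : M) : sm_act (tg_inv g) (sm_act g x) = x.
Proof. by rewrite -sm_act_mul tg_mulV sm_act_one. Qed.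

End SmodFacts.

Section Power.
Variables (G : topGroup) (K : fieldType) (actK : G -> K -> K).
Hypotheses (SM : smooth_field_action actK) (actK_one : forall a, actK (tg_one G) a = a).
Variables (I : Type) (M : smod actK).

Definition pow_act g (f : I -> M) : I -> M := fun i => sm_act g (f i).

Lemma pow_act_add g (f f' : I -> M) : pow_act g (f + f') = pow_act g f + pow_act g f'.
Proof. by apply/funext => i; rewrite /pow_act /= sm_act_add. Qed.
Lemma pow_act_scale g a (f : I -> M) : pow_act g (a *: f) = actK g a *: pow_act g f.
Proof. by apply/funext => i; rewrite /pow_act /= sm_act_scale. Qed.
Lemma pow_act_one (f : I -> M) : pow_act (tg_one G) f = f.
Proof. by apply/funext => i; rewrite /pow_act sm_act_one. Qed.
Lemma pow_act_mul g h (f : I -> M) : pow_act (tg_mul g h) f = pow_act g (pow_act h f).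
Proof. by apply/funext => i; rewrite /pow_act sm_act_mul. Qed.

Definition smooth_power : smod actK :=
  smooth_part pow_act_add pow_act_scale pow_act_one pow_act_mul SM actK_one.

Lemma power_proj_is_shom i : is_shom (fun x : smooth_power => val x i).
Proof. by []. Qed.

Definition power_proj i : shom smooth_power M := exist _ _ (power_proj_is_shom i).

Lemma smooth_power_is_product : is_product power_proj.
Proof.
move=> Y f.
have f_shom i := proj2_sig (f i).
pose uf (y : Y) : I -> M := fun i => shom_fun (f i) y.
have uf_smooth y : smooth_vec pow_act (uf y).
  apply: (smooth_vec_of_sub pow_act_mul (sm_smooth y)); first exact: sm_act_one.
  move=> g gy; apply/funext => i /=.
  by rewrite /pow_act /uf /shom_fun -(f_shom i).2 gy.
pose u (y : Y) : smooth_power := sub_elem (uf_smooth y).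
have u_shom : is_shom u.
  split=> [a x y|g x]; apply: val_inj; apply/funext => i /=.
    by rewrite /uf /shom_fun (f_shom i).1.
  by rewrite /uf /pow_act /shom_fun (f_shom i).2.
exists (exist _ u u_shom); split => // v v_proj y.
by apply: val_inj; apply/funext => i; exact: v_proj.
Qed.
End Power.

Lemma sumr_classes_eq0 (T : Type) (V : zmodType) (e : rel T) (P : pred T)
    (u : T -> V) (s : seq T) :
  reflexive e -> left_transitive e -> (forall x y, e x y -> P x = P y) ->
  (forall y, P y -> \sum_(x <- s | e x y) u x = 0) -> \sum_(x <- s | P x) u x = 0.
Proof.
move=> e_refl e_ltr; have e_sym x y : e x y -> e y x by move/e_ltr/(_ x); rewrite e_refl.
elim: s P => [|q s IH] P P_sat cls; first by rewrite big_nil.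
have cls_s y : P y -> ~~ e q y -> \sum_(x <- s | e x y) u x = 0.
  by move=> Py nqy; rewrite -[RHS](cls y Py) big_cons (negbTE nqy).
rewrite big_cons; case: ifP => Pq.
  have cls_q : u q + \sum_(x <- s | P x && e x q) u x = 0.
    rewrite -[RHS](cls q Pq) big_cons e_refl; congr (_ + _); apply: eq_bigl => x.
    by case exq: (e x q); rewrite ?andbT ?andbF ?(P_sat _ _ exq).
  rewrite (bigID (e^~ q)) /= addrA cls_q add0r.
  apply: IH => [x y /[dup] exy /e_ltr eq_xy|y /andP[Py nyq]].
    by rewrite (P_sat _ _ exy) eq_xy.
  by apply: cls_s => //; apply: contraNN nyq; apply: e_sym.
apply: IH => // y Py; apply: cls_s => //; apply: contraFN Pq => /P_sat ->.
exact: Py.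
Qed.

Section Dedekind.
Variables (K : fieldType) (T : Type) (chi : T -> K -> K) (F : set K).
Hypotheses (F1 : F 1) (FM : forall c d, F c -> F d -> F (c * d)).
Hypotheses (chi1 : forall t, chi t 1 = 1)
  (chiM : forall t c d, chi t (c * d) = chi t c * chi t d).

Definition agree_on : rel T := fun s t => `[< forall c, F c -> chi s c = chi t c >].

Lemma agree_on_refl : reflexive agree_on.
Proof. by move=> t; apply/asboolP. Qed.

Lemma agree_on_ltrans : left_transitive agree_on.
Proof.
move=> s t /asboolP st u; apply/asboolP/asboolP => [su c Fc|tu c Fc].
  by rewrite -st ?su.
by rewrite st ?tu.
Qed.

Variable W : lmodType K.

Definition char_relation (s : seq (T * W)) : Prop :=
  forall c, F c -> \sum_(p <- s) chi p.1 c *: p.2 = 0.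

(* Evaluate the relation at [d * c] and subtract [chi p0.1 d] times its value at [c]. *)
Lemma char_relation_shift p0 s d : F d -> char_relation (p0 :: s) ->
  char_relation [seq (p.1, (chi p.1 d - chi p0.1 d) *: p.2) | p <- s].
Proof.
move=> Fd rel c Fc; rewrite big_map /=.
have rel_dc : \sum_(p <- p0 :: s) chi p.1 (d * c) *: p.2 = 0 := rel _ (FM Fd Fc).
have rel_c : \sum_(p <- p0 :: s) chi p.1 c *: p.2 = 0 := rel _ Fc.
have : \sum_(p <- p0 :: s) chi p.1 (d * c) *: p.2
       - chi p0.1 d *: \sum_(p <- p0 :: s) chi p.1 c *: p.2 = 0.
  by rewrite rel_dc rel_c scaler0 subr0.
rewrite scaler_sumr -sumrB big_cons chiM scalerA subrr add0r => E.
rewrite -[RHS]E; apply: eq_bigr => p _; rewrite chiM !scalerA -scalerBl.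
by rewrite mulrBr ![chi p.1 c * _]mulrC.
Qed.

Lemma dedekind_independence s : char_relation s ->
  forall y, \sum_(p <- s | agree_on p.1 y) p.2 = 0.
Proof.
have [n] := ubnP (size s); elim: n s => // n IH [|p0 s] /= lt_s rel y.
  by rewrite big_nil.
have cls z : ~~ agree_on p0.1 z -> \sum_(p <- p0 :: s | agree_on p.1 z) p.2 = 0.
  move=> np0z; rewrite big_cons (negbTE np0z).
  move: np0z => /asboolPn /existsNP[d /not_implyP[Fd /eqP neq_d]].
  have := IH _ _ (char_relation_shift Fd rel) z; rewrite size_map => /(_ lt_s).
  rewrite big_map /= (eq_bigr (fun p => (chi z d - chi p0.1 d) *: p.2)) -?scaler_sumr.
    by move/eqP; rewrite scaler_eq0 subr_eq0 eq_sym (negbTE neq_d) => /eqP.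
  by move=> p /asboolP ->.
have [p0y|] := boolP (agree_on p0.1 y); last exact: cls.
(* The class of [p0] is the whole sum, i.e. the relation at [c = 1], minus the others. *)
have : \sum_(p <- p0 :: s) p.2 = 0.
  by rewrite -[RHS](rel 1 F1); apply: eq_bigr => p _; rewrite chi1 scale1r.
rewrite (bigID (fun p => agree_on p.1 y)) /=.
rewrite (@sumr_classes_eq0 _ _ (fun p q => agree_on p.1 q.1) (fun p => ~~ agree_on p.1 y))
  ?addr0 //.
- by move=> p; apply: agree_on_refl.
- by move=> p q /agree_on_ltrans pq r; apply: pq.
- by move=> p q /agree_on_ltrans ->.
by move=> z nzy; apply: cls; apply: contraNN nzy => /agree_on_ltrans <-.
Qed.

End Dedekind.

Section FieldAction.
Variables (G : topGroup) (K : fieldType) (actK : G -> K -> K).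
Hypothesis FA : field_action actK.
Local Notation mul := (@tg_mul G).
Local Notation inv := (@tg_inv G).
Local Notation one := (tg_one G).

Definition Fix (bs : seq K) : set G := [set g | forall b, b \in bs -> actK g b = b].

Definition fixed_field (U : set G) : set K := [set c | forall g, U g -> actK g c = c].

Lemma actK_one a : actK one a = a. Proof. by case: FA. Qed.

Lemma actK_invK g a : actK (inv g) (actK g a) = a.
Proof. by case: FA => _ _ _ a1 am; rewrite -am tg_mulV a1. Qed.

Lemma Fix_one bs : Fix bs one.
Proof. by move=> b _; rewrite actK_one. Qed.

Lemma actK1 g : actK g 1 = 1. Proof. by case: FA. Qed.

Lemma actKM g c d : actK g (c * d) = actK g c * actK g d. Proof. by case: FA. Qed.

Lemma fixed_field1 U : fixed_field U 1.
Proof. by move=> g _; rewrite actK1. Qed.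

Lemma fixed_fieldM U c d : fixed_field U c -> fixed_field U d -> fixed_field U (c * d).
Proof. by move=> Uc Ud g Ug; rewrite actKM Uc ?Ud. Qed.

Lemma Fix_of_agree bs h h0 :
  agree_on actK (fixed_field (Fix bs)) h h0 -> Fix bs (mul (inv h0) h).
Proof.
case: FA => _ _ _ _ am /asboolP agree b bs_b.
by rewrite am agree ?actK_invK // => g; exact.
Qed.

Hypothesis SM : smooth_field_action actK.

Lemma open_Fix bs : open (Fix bs).
Proof.
elim: bs => [|b bs IH].
  by rewrite (_ : Fix [::] = setT); [exact: openT | apply/funext => g; apply/propext].
rewrite (_ : Fix _ = [set g | actK g b = b] `&` Fix bs); first exact: openI.
apply/funext => g; apply/propext; split=> [Fg|[gb Fg] c].
  by split=> [|c cb]; apply: Fg; rewrite inE ?eqxx ?cb ?orbT.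
by rewrite inE => /orP[/eqP ->|/Fg].
Qed.

Hypotheses (NT : nontrivial_field_action actK) (UB : unibased G).

(* The stabiliser [H] of a moved field element [a] is an open proper subgroup, and its
   conjugates [g H g^-1] are the stabilisers of the [actK g a]. *)
Lemma Fix_nbhs1 (U : set G) : nbhs one U -> exists bs, Fix bs `<=` U.
Proof.
case: FA => _ _ _ aone amul nU; case: NT => g0 [a moved].
pose H := [set g : G | actK g a = a].
have H_sub : is_subgroup H.
  split; rewrite /H /= ?aone //; first by move=> x y Hx Hy; rewrite amul Hy Hx.
  by move=> x Hx; rewrite -{1}Hx actK_invK.
have H_proper : H <> setT by move=> HT; apply: moved; suff : H g0 by []; rewrite HT.
have [n [g sub_U]] := UB H_sub (SM a) H_proper nU.
exists [seq actK (g i) a | i <- enum 'I_n] => x Fx; apply: sub_U => i.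
exists (mul (mul (inv (g i)) x) (g i)).
  rewrite /H /= !amul Fx ?actK_invK //.
  by apply/mapP; exists i; rewrite ?mem_enum.
by rewrite -!tg_mulA tg_mulVr tg_mul1r !tg_mulA tg_mulVr tg_mul1.
Qed.

End FieldAction.

Section Combinations.
Variables (G : topGroup) (K : fieldType) (actK : G -> K -> K).
Local Notation mul := (@tg_mul G).
Local Notation one := (tg_one G).

Definition comb (M : smod actK) (f : seq (K * G * M)) : M :=
  \sum_(t <- f) t.1.1 *: sm_act t.1.2 t.2.

Lemma comb_cat (M : smod actK) (f f' : seq (K * G * M)) : comb (f ++ f') = comb f + comb f'.
Proof. exact: big_cat. Qed.

Lemma combZ (M : smod actK) a (f : seq (K * G * M)) :
  comb [seq (a * t.1.1, t.1.2, t.2) | t <- f] = a *: comb f.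
Proof. by rewrite /comb big_map scaler_sumr; apply: eq_bigr => t _; rewrite scalerA. Qed.

Lemma comb_act (M : smod actK) g (f : seq (K * G * M)) :
  comb [seq (actK g t.1.1, mul g t.1.2, t.2) | t <- f] = sm_act g (comb f).
Proof.
rewrite /comb big_map sm_act_sum; apply: eq_bigr => t _.
by rewrite sm_act_scale sm_act_mul.
Qed.

Lemma comb1 (M : smod actK) (x : M) : comb [:: (1, one, x)] = x.
Proof. by rewrite /comb big_seq1 scale1r sm_act_one. Qed.

Section Graph.
Variables (X V : smod actK) (delta : V -> X).

Definition graph_form (f : seq (K * G * V)) : seq (K * G * X) :=
  [seq (t.1, delta t.2) | t <- f].

Hypothesis graph_kernel : forall f, comb (graph_form f) = 0 -> comb f = 0.

Definition pair_act g (p : X * V) : X * V := (sm_act g p.1, sm_act g p.2).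

Lemma pair_act_add g (p q : X * V) : pair_act g (p + q) = pair_act g p + pair_act g q.
Proof. by rewrite /pair_act /= !sm_act_add. Qed.
Lemma pair_act_scale g a (p : X * V) : pair_act g (a *: p) = actK g a *: pair_act g p.
Proof. by rewrite /pair_act /= !sm_act_scale. Qed.
Lemma pair_act_one (p : X * V) : pair_act one p = p.
Proof. by case: p => x v; rewrite /pair_act /= !sm_act_one. Qed.
Lemma pair_act_mul g h (p : X * V) : pair_act (mul g h) p = pair_act g (pair_act h p).
Proof. by rewrite /pair_act /= !sm_act_mul. Qed.

Definition graph_span (p : X * V) : Prop := exists f, p = (comb (graph_form f), comb f).

Lemma graph_span0 : graph_span 0.
Proof. by exists [::]; rewrite /comb !big_nil. Qed.

Lemma graph_spanD p q : graph_span p -> graph_span q -> graph_span (p + q).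
Proof.
by move=> [f ->] [f' ->]; exists (f ++ f'); rewrite /graph_form map_cat !comb_cat.
Qed.

Lemma graph_spanZ a p : graph_span p -> graph_span (a *: p).
Proof.
move=> [f ->]; exists [seq (a * t.1.1, t.1.2, t.2) | t <- f].
have -> : graph_form [seq (a * t.1.1, t.1.2, t.2) | t <- f] =
          [seq (a * t.1.1, t.1.2, t.2) | t <- graph_form f] by rewrite /graph_form -!map_comp.
by rewrite !combZ.
Qed.

Lemma graph_span_act g p : graph_span p -> graph_span (pair_act g p).
Proof.
move=> [f ->]; exists [seq (actK g t.1.1, mul g t.1.2, t.2) | t <- f].
have -> : graph_form [seq (actK g t.1.1, mul g t.1.2, t.2) | t <- f] =
          [seq (actK g t.1.1, mul g t.1.2, t.2) | t <- graph_form f].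
  by rewrite /graph_form -!map_comp.
by rewrite !comb_act.
Qed.

Lemma graph_span_smooth p : graph_span p -> smooth_vec pair_act p.
Proof.
move=> _; rewrite /smooth_vec (_ : stabilizer _ _ =
  [set g | sm_act g p.1 = p.1] `&` [set g | sm_act g p.2 = p.2]).
  exact/openI/sm_smooth/sm_smooth.
apply/funext => g; apply/propext; case: p => x v; rewrite /stabilizer /pair_act /=.
by split=> [[-> ->]|[-> ->]].
Qed.

Definition graph_smod : smod actK :=
  sub_smod pair_act_add pair_act_scale pair_act_one pair_act_mul
  graph_span0 graph_spanD graph_spanZ graph_span_act graph_span_smooth.

Lemma graph_fst_is_shom : is_shom (fun p : graph_smod => (val p).1). Proof. by []. Qed.
Lemma graph_snd_is_shom : is_shom (fun p : graph_smod => (val p).2). Proof. by []. Qed.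

(* The span of the pairs [(delta v, v)] projects onto [V], and injectively to [X]. *)
Lemma subquotient_of_graph_kernel : subquotient V X.
Proof.
exists graph_smod, (exist _ _ graph_fst_is_shom), (exist _ _ graph_snd_is_shom); split.
  move=> p q /= eq1; apply: val_inj.
  have [f def_pq] : graph_span (val (p - q)) := sub_valP (p - q).
  have def1 : (val p).1 - (val q).1 = comb (graph_form f) := congr1 fst def_pq.
  have kernel_f : comb f = 0 by apply: graph_kernel; rewrite -def1 eq1 subrr.
  apply/eqP; rewrite -subr_eq0; apply/eqP.
  by rewrite -[_ - _]/(val (p - q)) def_pq -def1 eq1 subrr kernel_f.
move=> v; have span_v : graph_span (delta v, v).
  by exists [:: (1, one, v)]; rewrite /graph_form /= !comb1.
by exists (sub_elem span_v).
Qed.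

End Graph.
End Combinations.

Section Embedding.
Variables (G : topGroup) (K : fieldType) (actK : G -> K -> K).
Hypotheses (FA : field_action actK) (SM : smooth_field_action actK)
  (NT : nontrivial_field_action actK) (UB : unibased G).
Variables (M : smod actK) (m : M).
Hypothesis m_neq0 : m != 0.
Variable V : smod actK.

Lemma exists_Fix_sub_stab (v : V) :
  exists bs, Fix actK bs `<=` [set g | sm_act g v = v /\ sm_act g m = m].
Proof.
apply: (Fix_nbhs1 FA SM NT UB); apply: open_nbhs_nbhs; split.
  exact: openI (sm_smooth v) (sm_smooth m).
by rewrite /= !sm_act_one.
Qed.

Definition fixing_seq (v : V) : seq K := projT1 (cid (exists_Fix_sub_stab v)).

Lemma fixing_seqP v : Fix actK (fixing_seq v) `<=` [set g | sm_act g v = v /\ sm_act g m = m].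
Proof. exact: projT2 (cid (exists_Fix_sub_stab v)). Qed.

Local Notation Fld v := (fixed_field actK (Fix actK (fixing_seq v))).
Local Notation X := (smooth_power SM (actK_one FA) (V * K) M).

Lemma agree_Fld_act (w : V) h h0 :
  agree_on actK (Fld w) h h0 -> sm_act h w = sm_act h0 w /\ sm_act h m = sm_act h0 m.
Proof.
move=> /(Fix_of_agree FA) /fixing_seqP[Ew Em].
by split; rewrite -(tg_mulKVg h0 h) sm_act_mul ?Ew ?Em.
Qed.

Lemma sm_act_neq0 h : sm_act h m != 0.
Proof. by apply: contraNneq m_neq0 => hm0; rewrite -(sm_act_invK h m) hm0 sm_act0. Qed.

(* Restricting [c] to [Fld w] is what makes [delta w] smooth. *)
Definition delta_fun (w : V) : V * K -> M :=
  fun i => if `[< i.1 = w /\ Fld w i.2 >] then i.2 *: m else 0.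

Lemma delta_smooth w : smooth_vec (@pow_act _ _ _ (V * K) M) (delta_fun w).
Proof.
apply: (smooth_vec_of_sub (@pow_act_mul _ _ _ _ M) (open_Fix SM (fixing_seq w))
  (@Fix_one _ _ _ FA (fixing_seq w))).
move=> g Fg; apply/funext => -[v c]; rewrite /pow_act /delta_fun /=.
case: asboolP => [[_ Fc]|_]; last exact: sm_act0.
by rewrite sm_act_scale (Fc g Fg) (fixing_seqP Fg).2.
Qed.

Definition delta (w : V) : X := sub_elem (delta_smooth w).

Lemma comb_graph_at (f : seq (K * G * V)) w c : Fld w c ->
  val (comb (graph_form delta f)) (w, c) =
  \sum_(t <- f | t.2 == w) actK t.1.2 c *: (t.1.1 *: sm_act t.1.2 m).
Proof.
move=> Fc; rewrite /comb big_map raddf_sum fct_sumE [RHS]big_mkcond.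
apply: eq_bigr => -[[a h] v] _.
rewrite -[LHS]/(a *: sm_act h (delta_fun v (w, c))) /delta_fun /=.
case: asboolP => [[<- _]|ncond]; first by rewrite eqxx sm_act_scale !scalerA mulrC.
by case: eqP => [vw|_]; [case: ncond; rewrite vw | rewrite sm_act0 scaler0].
Qed.

Lemma coef_class_eq0 (f : seq (K * G * V)) w h0 : comb (graph_form delta f) = 0 ->
  \sum_(t <- f | (t.2 == w) && agree_on actK (Fld w) t.1.2 h0) t.1.1 = 0.
Proof.
move=> kernel.
have rel : char_relation actK (Fld w)
    [seq (t.1.2, t.1.1 *: sm_act t.1.2 m) | t <- f & t.2 == w].
  by move=> c Fc; rewrite big_map big_filter -(comb_graph_at f Fc) kernel.
have := dedekind_independence (@fixed_field1 _ _ _ FA _) (@fixed_fieldM _ _ _ FA _)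
  (actK1 FA) (actKM FA) rel h0.
rewrite big_map big_filter_cond /= => class0.
suff : (\sum_(t <- f | (t.2 == w) && agree_on actK (Fld w) t.1.2 h0) t.1.1)
         *: sm_act h0 m = 0.
  by move/eqP; rewrite scaler_eq0 (negbTE (sm_act_neq0 h0)) orbF => /eqP.
rewrite scaler_suml -[RHS]class0; apply: eq_bigr => t /andP[_ agree].
by rewrite (agree_Fld_act agree).2.
Qed.

Lemma comb_graph_kernel (f : seq (K * G * V)) :
  comb (graph_form delta f) = 0 -> comb f = 0.
Proof.
move=> kernel.
pose e : rel (K * G * V) :=
  fun t t' => (t.2 == t'.2) && agree_on actK (Fld t.2) t.1.2 t'.1.2.
apply: (@sumr_classes_eq0 _ _ e predT) => //.
- by move=> t; rewrite /e eqxx agree_on_refl.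
- move=> t t' /andP[/eqP tt' agree_tt'] u; rewrite /e tt' in agree_tt' *.
  by rewrite (agree_on_ltrans agree_tt').
move=> [[a0 h0] w] _; rewrite /e /=.
rewrite (eq_bigl (fun t => (t.2 == w) && agree_on actK (Fld w) t.1.2 h0)); last first.
  by move=> t; case: eqP => //= ->.
rewrite (eq_bigr (fun t => t.1.1 *: sm_act h0 w)).
  by rewrite -scaler_suml (coef_class_eq0 _ _ kernel) scale0r.
by move=> t /andP[/eqP <- agree]; rewrite (agree_Fld_act agree).1.
Qed.

Lemma subquotient_smooth_power : subquotient V X.
Proof. exact: subquotient_of_graph_kernel comb_graph_kernel. Qed.

End Embedding.

Lemma sequiv_all_smod_full (G : topGroup) (K : fieldType) (actK : G -> K -> K)
    (P : smod actK -> Prop) :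
  (forall M, P M) -> sequiv (@all_smod G K actK) P.
Proof.
move=> PM.
pose F := @SFunctor G K actK (@all_smod G K actK) P
  (fun X => exist P (proj1_sig X) (PM _)) (fun X Y f => f)
  (fun X x => erefl) (fun X Y Z f g x => erefl).
pose H := @SFunctor G K actK P (@all_smod G K actK)
  (fun X => exist (@all_smod G K actK) (proj1_sig X) Logic.I) (fun X Y f => f)
  (fun X x => erefl) (fun X Y Z f g x => erefl).
by exists F, H, (fun X => sid _), (fun X => sid _), (fun Y => sid _), (fun Y => sid _).
Qed.

Theorem proposition3p3 (G : topGroup) (K : fieldType) (actK : G -> K -> K) :
  permutation_group G -> unibased G ->
  field_action actK -> smooth_field_action actK -> nontrivial_field_action actK ->
  forall P : smod actK -> Prop,
    (exists M, P M /\ nonzero_smod M) ->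
    closed_products P -> closed_subquotients P ->
    sequiv (@all_smod G K actK) P.
Proof.
move=> _ UB FA SM NT P [M [PM [m /eqP m_neq0]]] CP CS.
apply: sequiv_all_smod_full => V.
apply: (CS _ _ _ (subquotient_smooth_power FA SM NT UB m_neq0 V)).
exact: (CP _ _ _ _ (fun=> PM) (@smooth_power_is_product _ _ _ SM (actK_one FA) _ M)).
Qed.
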